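(* Let $X,Y\in L^\infty$ and $k,b\in\mathbb{K}$. Then (a) $\mathbb{E}[kX+b]=k\,\mathbb{E}[X]+b$; (b) $\mathbb{E}[X+Y]\subseteq \mathbb{E}[X]+\mathbb{E}[Y]=\{a+c: a\in\mathbb{E}[X],\,c\in\mathbb{E}[Y]\}$, with equality when $X$ and $Y$ are independent; (c) if $X$ and $Y$ are independent, then $\mathbb{E}[XY]=\mathbb{E}[X]\,\mathbb{E}[Y]=\{ac: a\in\mathbb{E}[X],\,c\in\mathbb{E}[Y]\}$.
   Context: $\mathbb{K}$ is a local field with non-archimedean absolute value $|\cdot|$ satisfying $|x|=0 \iff x=0$, $|xy|=|x||y|$ and $|x+y|\le |x|\vee|y|$. $(\Omega,\mathcal{F},\mathbb{P})$ is a probability space; random variables equal a.s. are identified. $L^\infty$ is the space of $\mathbb{K}$-valued random variables $X$ with $\|X\|_\infty:=\operatorname{ess\,sup}|X|<\infty$. For $X\in L^\infty$, $\varepsilon(X):=\inf\{\|X-c\|_\infty : c\in\mathbb{K}\}$ and $\mathbb{E}[X]:=\{c\in\mathbb{K} : \|X-c\|_\infty=\varepsilon(X)\}$. *)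

From HB Require Import structures.
From mathcomp Require Import all_boot all_order all_algebra.
From mathcomp Require Import all_classical all_reals all_analysis ess_sup_inf.
Set Implicit Arguments. Unset Strict Implicit. Unset Printing Implicit Defensive.
Import Order.TTheory GRing.Theory Num.Theory.
Local Open Scope classical_set_scope.
Local Open Scope ring_scope.

(* [nabs] is a non-archimedean absolute value on the field K making K a
   (non-archimedean) local field: nontrivial (= non-discrete topology) and
   locally compact (some closed ball around 0 of positive radius is
   sequentially compact for the metric (x,y) |-> nabs (x - y)). *)
Definition nonarch_local_field_abs (R : realType) (K : fieldType) (nabs : K -> R) : Prop :=
  (forall x, 0 <= nabs x) /\
  (forall x, nabs x = 0 <-> x = 0) /\
  (forall x y, nabs (x * y) = nabs x * nabs y) /\
  (forall x y, nabs (x + y) <= Num.max (nabs x) (nabs y)) /\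
  (exists x, 0 < nabs x /\ nabs x < 1) /\
  (exists r : R, 0 < r /\
     forall u : nat -> K, (forall n, nabs (u n) <= r) ->
       exists phi : nat -> nat, (forall n, (phi n < phi n.+1)%N) /\
         exists l : K, forall e : R, 0 < e ->
           exists N : nat, forall n, (N <= n)%N -> nabs (u (phi n) - l) < e).

Definition openK (R : realType) (K : fieldType) (nabs : K -> R) (U : set K) : Prop :=
  forall x, U x -> exists2 r : R, 0 < r & forall y, nabs (y - x) < r -> U y.

Definition borelK (R : realType) (K : fieldType) (nabs : K -> R) : set (set K) :=
  <<s openK nabs >>.

Definition measurableK (R : realType) (K : fieldType) (nabs : K -> R)
  (d : measure_display) (Omega : measurableType d) (X : Omega -> K) : Prop :=
  forall B, borelK nabs B -> measurable (X @^-1` B).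

Definition normInf (R : realType) (K : fieldType) (nabs : K -> R)
  (d : measure_display) (Omega : measurableType d) (P : probability Omega R)
  (X : Omega -> K) : \bar R :=
  ess_sup P (fun w => (nabs (X w))%:E).

Definition inLinf (R : realType) (K : fieldType) (nabs : K -> R)
  (d : measure_display) (Omega : measurableType d) (P : probability Omega R)
  (X : Omega -> K) : Prop :=
  measurableK nabs X /\ (normInf nabs P X < +oo)%E.

Definition epsK (R : realType) (K : fieldType) (nabs : K -> R)
  (d : measure_display) (Omega : measurableType d) (P : probability Omega R)
  (X : Omega -> K) : \bar R :=
  ereal_inf [set normInf nabs P (fun w => X w - c) | c in [set: K]].

Definition ExpK (R : realType) (K : fieldType) (nabs : K -> R)
  (d : measure_display) (Omega : measurableType d) (P : probability Omega R)
  (X : Omega -> K) : set K :=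
  [set c | normInf nabs P (fun w => X w - c) = epsK nabs P X].

Definition indepK (R : realType) (K : fieldType) (nabs : K -> R)
  (d : measure_display) (Omega : measurableType d) (P : probability Omega R)
  (X Y : Omega -> K) : Prop :=
  forall A B, borelK nabs A -> borelK nabs B ->
    P (X @^-1` A `&` Y @^-1` B) = (P (X @^-1` A) * P (Y @^-1` B))%E.

From HB Require Import structures.
From mathcomp Require Import all_boot all_order all_algebra.
From mathcomp Require Import all_classical all_reals all_analysis ess_sup_inf.
From mathcomp Require Import ring lra.
Import Order.TTheory GRing.Theory Num.Theory.
Local Open Scope classical_set_scope.
Local Open Scope ring_scope.
Set Implicit Arguments. Unset Strict Implicit. Unset Printing Implicit Defensive.

(* In an ultrametric field, if Z is essentially bounded and c0 is in E[Z], then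
   ||Z - c||_oo = max(|c - c0|, eps(Z)) for every c: E[Z] is the closed ball of
   radius eps(Z) about any of its points, and it is nonempty because bounded
   subsets of K are relatively compact.  The three statements thus become
   identities between closed balls: affine images of balls are balls, and
     B(x, r) + B(y, s) = B(x + y, max(r, s)),
     B(x, r) * B(y, s) = B(x y, max(max(|x|, r) s, max(|y|, s) r)),
   where max(|x|, r) = ||X||_oo when B(x, r) = E[X] (an absolute value, by
   compactness again).  The bounds ||X + Y - (x + y)||_oo <= max(r, s) and its
   product analogue hold pointwise.  For independent X and Y the reverse bounds
   come from restricting one variable to a small ball of positive probability:
   on that event X + Y (resp. XY) is close to a translate (resp. multiple) of
   the other variable, whose essential range is unchanged by independence. *)

Section Ultrametric.
Variables (R : realType) (K : fieldType) (nabs : K -> R).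
Hypothesis hK : nonarch_local_field_abs nabs.

Definition cball (c : K) (r : R) : set K := [set x | nabs (x - c) <= r].

Lemma nabs_ge0 x : 0 <= nabs x.
Proof. by case: hK. Qed.

Lemma nabs_eq0 x : nabs x = 0 <-> x = 0.
Proof. by case: hK => _ []. Qed.

Lemma nabsM x y : nabs (x * y) = nabs x * nabs y.
Proof. by case: hK => _ [] _ []. Qed.

Lemma nabsD x y : nabs (x + y) <= Num.max (nabs x) (nabs y).
Proof. by case: hK => _ [] _ [] _ []. Qed.

Lemma nabs0 : nabs 0 = 0.
Proof. exact/nabs_eq0. Qed.

Lemma nabs_gt0 x : (0 < nabs x) = (x != 0).
Proof.
rewrite lt0r nabs_ge0 andbT; congr (~~ _).
by apply/eqP/eqP => [/nabs_eq0 //|->]; exact: nabs0.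
Qed.

Lemma nabs1 : nabs 1 = 1.
Proof.
have n10 : nabs 1 != 0 by rewrite gt_eqF // nabs_gt0 oner_neq0.
by apply: (mulfI n10); rewrite -nabsM !mulr1.
Qed.

Lemma nabsN x : nabs (- x) = nabs x.
Proof.
have nN1 : nabs (-1) = 1.
  apply/eqP; rewrite -(@eqrXn2 _ 2) ?nabs_ge0 // expr1n expr2 -nabsM.
  by rewrite mulrNN mulr1 nabs1.
by rewrite -mulN1r nabsM nN1 mul1r.
Qed.

Lemma nabsV x : nabs x^-1 = (nabs x)^-1.
Proof.
have [->|x0] := eqVneq x 0; first by rewrite invr0 nabs0 invr0.
have nx0 : nabs x != 0 by rewrite gt_eqF // nabs_gt0.
by apply: (mulfI nx0); rewrite -nabsM !mulfV ?nabs1.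
Qed.

Lemma nabsX x n : nabs (x ^+ n) = nabs x ^+ n.
Proof. by elim: n => [|n IH]; rewrite ?expr0 ?nabs1 // !exprS nabsM IH. Qed.

Lemma nabs_distC x y : nabs (x - y) = nabs (y - x).
Proof. by rewrite -nabsN opprB. Qed.

Lemma nabsD_le x y r : nabs x <= r -> nabs y <= r -> nabs (x + y) <= r.
Proof. by move=> xr yr; apply: le_trans (nabsD x y) _; rewrite ge_max xr yr. Qed.

Lemma nabsB_le x y r : nabs x <= r -> nabs y <= r -> nabs (x - y) <= r.
Proof. by move=> xr yr; apply: nabsD_le; rewrite ?nabsN. Qed.

Lemma nabs_dist_le x y z r : nabs (x - y) <= r -> nabs (y - z) <= r -> nabs (x - z) <= r.
Proof. by move=> xy yz; rewrite -[x](subrK y) -addrA; apply: nabsD_le. Qed.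

Lemma nabs_isosceles x y : nabs (x - y) < nabs x -> nabs y = nabs x.
Proof.
move=> lt_xy_x; apply/eqP; rewrite eq_le; apply/andP; split.
  have -> : y = x - (x - y) by rewrite opprB addrC subrK.
  exact: nabsB_le (lexx _) (ltW lt_xy_x).
rewrite leNgt; apply/negP => lt_y_x.
by have := nabsD (x - y) y; rewrite subrK le_max !leNgt lt_xy_x lt_y_x.
Qed.

Lemma cball0 c : cball c 0 = [set c].
Proof.
rewrite /cball; apply/seteqP; split => x /=; last by move->; rewrite subrr nabs0.
by move=> x0; apply/eqP; rewrite -subr_eq0; apply/eqP/nabs_eq0/le_anti; rewrite x0 nabs_ge0.
Qed.

Lemma cball_recenter c r x : cball c r x -> cball c r `<=` cball x r.
Proof. by rewrite /cball /= nabs_distC => cx y cy; apply: nabs_dist_le cy cx. Qed.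

Lemma nabs_le_cball c r x : cball c r x -> nabs x <= Num.max (nabs c) r.
Proof.
by move=> cx; rewrite -[x](subrK c); apply: nabsD_le; rewrite le_max ?cx ?lexx ?orbT.
Qed.

Lemma cball_addE x y r s : 0 <= r -> 0 <= s ->
  [set a + b | a in cball x r & b in cball y s] = cball (x + y) (Num.max r s).
Proof.
move=> r0 s0; rewrite /cball; apply/seteqP; split => [_ [a xa] [b yb] <-|u] /=.
  rewrite opprD addrACA; apply: nabsD_le; rewrite le_max ?xa ?yb ?orbT //.
have [sr|rs] := leP s r => /= xyu.
  exists (u - y); first by rewrite -addrA -opprD (addrC y).
  by exists y; rewrite ?subrr ?nabs0 ?subrK.
exists x; first by rewrite subrr nabs0.
by exists (u - x); rewrite ?(addrC x) ?subrK // -addrA -opprD.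
Qed.

Lemma exists_cball_nabs_max x r : 0 <= r -> (exists a, nabs a = Num.max (nabs x) r) ->
  exists2 a, cball x r a & nabs a = Num.max (nabs x) r.
Proof.
move=> r0 [a0 a0E]; have [xr|rx] := leP (nabs x) r.
  exists a0; last by rewrite a0E (max_idPr xr).
  by apply: nabsB_le; rewrite // a0E (max_idPr xr).
by exists x; rewrite /cball /= ?subrr ?nabs0.
Qed.

(* The value group of [nabs] may be discrete, hence the hypotheses that the radii
   [max (nabs x) r] and [max (nabs y) s] are absolute values. *)
Lemma cball_mul_factor x y r s u : 0 <= r -> 0 <= s ->
  (exists a, nabs a = Num.max (nabs x) r) -> (exists b, nabs b = Num.max (nabs y) s) ->
  nabs (u - x * y) <= Num.max (Num.max (nabs x) r * s) (Num.max (nabs y) s * r) ->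
  exists a b, [/\ cball x r a, cball y s b & u = a * b].
Proof.
move=> + + + + uxy.
wlog le_yx : x y r s uxy / Num.max (nabs y) s * r <= Num.max (nabs x) r * s.
  move=> hwlog r0 s0 hx hy.
  have [le_yx|/ltW le_xy] := leP (Num.max (nabs y) s * r) (Num.max (nabs x) r * s).
    exact: hwlog.
  have [|b [a [yb xa ->]]] := hwlog y x s r _ le_xy s0 r0 hy hx.
    by rewrite maxC mulrC.
  by exists a, b; rewrite mulrC.
move=> r0 s0 hx _; move: uxy; rewrite (max_idPl le_yx) => uxy.
have [a xa aE] := exists_cball_nabs_max r0 hx.
have [a0|a0] := eqVneq a 0.
  have : Num.max (nabs x) r <= 0 by rewrite -aE a0 nabs0.
  rewrite ge_max => /andP[x0 r_le0].
  have xE : x = 0 by apply/nabs_eq0/le_anti; rewrite x0 nabs_ge0.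
  have rE : r = 0 by apply/le_anti; rewrite r_le0 r0.
  have uE : u = 0.
    apply/nabs_eq0/le_anti; rewrite nabs_ge0 andbT.
    by move: uxy; rewrite xE rE nabs0 maxxx ?mul0r ?mulr0 ?subr0 ?maxxx.
  by exists 0, y; split; rewrite /cball /= ?uE ?xE ?rE ?mul0r ?subrr ?nabs0.
exists a, (u / a); split => //; last by rewrite mulrC divfK.
rewrite /cball /=.
have -> : u / a - y = (u - a * y) / a by rewrite mulrBl mulrAC divff // mul1r.
rewrite nabsM nabsV aE ler_pdivrMr; last by rewrite -aE nabs_gt0.
rewrite [s * _]mulrC.
have -> : u - a * y = (u - x * y) + (x - a) * y by ring.
apply: nabsD_le; rewrite // nabsM nabs_distC; apply: le_trans le_yx; rewrite mulrC.
by apply: ler_pM; rewrite ?nabs_ge0 // nabs_le_cball // /cball /= subrr nabs0.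
Qed.

Lemma cball_mulE x y r s : 0 <= r -> 0 <= s ->
  (exists a, nabs a = Num.max (nabs x) r) -> (exists b, nabs b = Num.max (nabs y) s) ->
  [set a * b | a in cball x r & b in cball y s] =
  cball (x * y) (Num.max (Num.max (nabs x) r * s) (Num.max (nabs y) s * r)).
Proof.
move=> r0 s0 hx hy; apply/seteqP; split => [_ [a xa] [b yb] <-|u /cball_mul_factor].
  rewrite /cball /=.
  have -> : a * b - x * y = (a - x) * b + x * (b - y) by ring.
  apply: nabsD_le; rewrite nabsM le_max; apply/orP; [right|left].
    by rewrite mulrC; exact: ler_pM (nabs_ge0 _) (nabs_ge0 _) (nabs_le_cball yb) xa.
  by apply: ler_pM; rewrite ?nabs_ge0 // le_max lexx.
by case=> // a [b [xa yb ->]]; exists a => //; exists b.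
Qed.

End Ultrametric.

Section LocalCompactness.
Variables (R : realType) (K : fieldType) (nabs : K -> R).
Hypothesis hK : nonarch_local_field_abs nabs.

Lemma exists_nabs_lt e : 0 < e -> exists2 t, t != 0 & nabs t < e.
Proof.
move=> e0; case: hK => _ [_ [_ [_ [[x [x0 x1]] _]]]].
have x_lt1 : `|nabs x| < 1 by rewrite ger0_norm ?(nabs_ge0 hK).
have [n /=] := filter_ex (cvgr0_norm_lt _ (cvg_expr x_lt1) e e0).
rewrite ger0_norm ?exprn_ge0 ?(nabs_ge0 hK) // => xn.
exists (x ^+ n); last by rewrite (nabsX hK).
by rewrite expf_neq0 // -(nabs_gt0 hK).
Qed.

Lemma bounded_cluster (u : nat -> K) M : (forall n, nabs (u n) <= M) ->
  exists l, forall e, 0 < e -> forall m, exists2 n, (m <= n)%N & nabs (u n - l) < e.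
Proof.
case: hK => _ [_ [_ [_ [_ [r [r0 seq_compact]]]]]] uM.
have M1 : 0 < `|M| + 1 by rewrite ltr_wpDl.
have [t t0 tr] := exists_nabs_lt (divr_gt0 r0 M1).
have [|phi [phi_incr [l tu_l]]] := seq_compact (fun n => t * u n).
  move=> n; rewrite (nabsM hK); apply: le_trans (ltW (_ : nabs t * (`|M| + 1) < r)).
    rewrite ler_wpM2l ?(nabs_ge0 hK) //; apply: le_trans (uM n) _.
    by rewrite (le_trans (ler_norm M)) ?lerDl.
  by rewrite -ltr_pdivlMr.
have phi_ge n : (n <= phi n)%N by elim: n => // n IH; exact: leq_ltn_trans IH (phi_incr n).
have t_gt0 : 0 < nabs t by rewrite (nabs_gt0 hK).
exists (l / t) => e e0 m; have [N tuN] := tu_l (e * nabs t) (mulr_gt0 e0 t_gt0).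
exists (phi (maxn N m)); first exact: leq_trans (leq_maxr N m) (phi_ge _).
have := tuN _ (leq_maxl N m).
rewrite -{1}[l](divfK t0) [_ / t * t]mulrC -mulrBr (nabsM hK) mulrC.
by rewrite ltr_pM2r.
Qed.

Lemma finite_cover y rho : 0 < rho ->
  exists L : seq K, forall x, nabs x <= y -> exists2 z, z \in L & nabs (x - z) <= rho.
Proof.
move=> rho0; apply: contrapT => no_cover.
have far (L : seq K) : exists x, nabs x <= y /\ forall z, z \in L -> rho < nabs (x - z).
  apply: contrapT => no_far; apply: no_cover; exists L => x xy.
  apply: contrapT => no_z; apply: no_far; exists x; split => // z zL.
  by rewrite ltNge; apply/negP => xz; apply: no_z; exists z.
(* A sequence avoiding the balls around its previous terms has no cluster point. *)
have [f f_far] := choice far.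
pose pts n := iter n (fun L => f L :: L) [::].
pose u n := f (pts n).
have u_in m n : (m < n)%N -> u m \in pts n.
  elim: n => // n IH; rewrite ltnS leq_eqVlt => /orP[/eqP->|/IH umn].
    exact: mem_head.
  by rewrite in_cons umn orbT.
have [l l_cluster] := bounded_cluster (fun n => proj1 (f_far (pts n))).
have [m _ uml] := l_cluster rho rho0 0.
have [n mn unl] := l_cluster rho rho0 m.+1.
have := proj2 (f_far (pts n)) _ (u_in _ _ mn); rewrite ltNge => /negP; apply.
by apply: (nabs_dist_le hK (ltW unl)); rewrite (nabs_distC hK) ltW.
Qed.

End LocalCompactness.

Lemma invSn_le (R : numFieldType) m n : (m <= n)%N -> n.+1%:R^-1 <= m.+1%:R^-1 :> R.
Proof. by move=> mn; rewrite lef_pV2 ?posrE ?ltr0n // ler_nat ltnS. Qed.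

Section EssSupDistance.
Variables (R : realType) (K : fieldType) (nabs : K -> R).
Hypothesis hK : nonarch_local_field_abs nabs.
Variables (d : measure_display) (Omega : measurableType d) (P : probability Omega R).
Implicit Types (Z : Omega -> K) (c : K).

Definition ess_bounded Z := exists y : R, \forall w \ae P, nabs (Z w) <= y.

(* [fine] maps [+oo] to [0]: [dev Z c] is meaningful only for essentially bounded [Z]. *)
Definition dev Z c : R := fine (normInf nabs P (fun w => Z w - c)).

Let P_gt0 : (0 < P [set: Omega])%E.
Proof. by rewrite probability_setT. Qed.

Lemma ae_ex (Q : Omega -> Prop) : (\forall w \ae P, Q w) -> exists w, Q w.
Proof. exact: (@filter_ex _ _ (ae_properfilter_algebraOfSetsType P_gt0)). Qed.

Lemma normInf_ge0 Z : (0 <= normInf nabs P Z)%E.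
Proof. by apply: ess_sup_gee => //; apply: aeW => w; rewrite lee_fin (nabs_ge0 hK). Qed.

Lemma ess_bounded_normInf Z : (normInf nabs P Z < +oo)%E -> ess_bounded Z.
Proof.
have := normInf_ge0 Z; have := ess_sup_ge P (fun w => (nabs (Z w))%:E).
rewrite -/(normInf nabs P Z); case: (normInf nabs P Z) => // y ae_y _ _.
by exists y; apply: filterS ae_y => w; rewrite lee_fin.
Qed.

Lemma ess_bounded_cst b : ess_bounded (fun _ => b).
Proof. by exists (nabs b); apply: aeW. Qed.

Lemma ess_boundedD X Y : ess_bounded X -> ess_bounded Y -> ess_bounded (fun w => X w + Y w).
Proof.
case=> [x Xx] [y Yy]; exists (Num.max x y); apply: filterS2 Xx Yy => w wx wy.
by apply: (nabsD_le hK); rewrite le_max ?wx ?wy ?orbT.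
Qed.

Lemma ess_boundedM X Y : ess_bounded X -> ess_bounded Y -> ess_bounded (fun w => X w * Y w).
Proof.
case=> [x Xx] [y Yy]; exists (x * y); apply: filterS2 Xx Yy => w wx wy.
by rewrite (nabsM hK) ler_pM ?(nabs_ge0 hK).
Qed.

Lemma ess_bounded_affine Z k b : ess_bounded Z -> ess_bounded (fun w => k * Z w + b).
Proof. by move=> Zb; apply: ess_boundedD (ess_boundedM _ Zb) _; exact: ess_bounded_cst. Qed.

Lemma normInf_dev Z c : ess_bounded Z ->
  normInf nabs P (fun w => Z w - c) = (dev Z c)%:E.
Proof.
case=> y ae_y; have : (normInf nabs P (fun w => (Z w - c)%R) <= (Num.max y (nabs c))%:E)%E.
  apply/ess_supP; apply: filterS ae_y => w wy.
  by rewrite lee_fin; apply: (nabsB_le hK); rewrite le_max ?wy ?lexx ?orbT.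
by rewrite /dev; move: (normInf_ge0 (fun w => Z w - c)); case: normInf.
Qed.

Lemma dev_ge0 Z c : 0 <= dev Z c.
Proof. exact/fine_ge0/normInf_ge0. Qed.

Lemma dev_ae Z c : ess_bounded Z -> \forall w \ae P, nabs (Z w - c) <= dev Z c.
Proof.
move=> Zb; have := ess_sup_ge P (fun w => (nabs (Z w - c))%:E).
by rewrite -/(normInf _ _ _) normInf_dev //; apply: filterS => w; rewrite lee_fin.
Qed.

Lemma dev_le Z c y : ess_bounded Z ->
  (\forall w \ae P, nabs (Z w - c) <= y) -> dev Z c <= y.
Proof.
move=> Zb ae_y; rewrite -lee_fin -normInf_dev //; apply/ess_supP.
by apply: filterS ae_y => w; rewrite lee_fin.
Qed.

Lemma ExpKP Z c : ess_bounded Z -> ExpK nabs P Z c <-> forall c', dev Z c <= dev Z c'.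
Proof.
move=> Zb; rewrite /ExpK /epsK /= normInf_dev //; split => [devE c'|min_c].
  by rewrite -lee_fin devE -normInf_dev //; apply: ereal_inf_lbound; exists c'.
apply/le_anti; rewrite ereal_inf_lbound ?andbT; last by exists c; rewrite ?normInf_dev.
by apply/ereal_infP => _ [c' _ <-]; rewrite normInf_dev // lee_fin.
Qed.

Lemma nabs_sub_le_dev Z c c' : ess_bounded Z -> nabs (c - c') <= Num.max (dev Z c) (dev Z c').
Proof.
move=> Zb; have [w [wc wc']] := ae_ex (filterI (dev_ae c Zb) (dev_ae c' Zb)).
apply: (nabs_dist_le hK (y := Z w)); first rewrite (nabs_distC hK).
  all: by rewrite le_max ?wc ?wc' ?orbT.
Qed.

Lemma dev_shift Z c c' : ess_bounded Z -> dev Z c' <= Num.max (dev Z c) (nabs (c - c')).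
Proof.
move=> Zb; apply: dev_le => //; apply: filterS (dev_ae c Zb) => w wc.
by apply: (nabs_dist_le hK (y := c)); rewrite le_max ?wc ?lexx ?orbT.
Qed.

Lemma dev_ExpK Z c c' : ess_bounded Z -> ExpK nabs P Z c ->
  dev Z c' = Num.max (nabs (c' - c)) (dev Z c).
Proof.
move=> Zb /(ExpKP _ Zb) min_c; apply/le_anti/andP; split.
  by rewrite maxC (nabs_distC hK); exact: dev_shift.
rewrite ge_max min_c andbT; apply: le_trans (nabs_sub_le_dev _ _ Zb) _.
by rewrite ge_max lexx min_c.
Qed.

Lemma ExpK_sub_cball Z c r : ess_bounded Z -> dev Z c <= r ->
  ExpK nabs P Z `<=` cball nabs c r.
Proof.
move=> Zb cr c' /(ExpKP _ Zb) min_c'; apply: le_trans (nabs_sub_le_dev _ _ Zb) _.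
by rewrite ge_max cr (le_trans (min_c' c)).
Qed.

Lemma ExpK_eq_cball Z c r : ess_bounded Z -> dev Z c <= r ->
  (forall c', r <= dev Z c') -> ExpK nabs P Z = cball nabs c r.
Proof.
move=> Zb cr r_min; have devE : dev Z c = r by apply/le_anti; rewrite cr r_min.
have c_min : ExpK nabs P Z c by apply/ExpKP => // c'; rewrite devE.
apply/seteqP; split; first exact: ExpK_sub_cball.
move=> c' cc'; apply/ExpKP => // c''; rewrite (dev_ExpK _ Zb c_min) devE ge_max r_min andbT.
exact: le_trans cc' (r_min _).
Qed.

Lemma ExpK_cball Z c : ess_bounded Z -> ExpK nabs P Z c ->
  ExpK nabs P Z = cball nabs c (dev Z c).
Proof. by move=> Zb /(ExpKP _ Zb) c_min; apply: ExpK_eq_cball. Qed.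

Lemma ExpK_cst b : ExpK nabs P (fun _ => b) = [set b].
Proof.
rewrite -(cball0 hK); apply: ExpK_eq_cball (ess_bounded_cst b) _ _ => [|c]; last exact: dev_ge0.
by apply: dev_le (ess_bounded_cst b) _; apply: aeW => w; rewrite subrr (nabs0 hK).
Qed.

Lemma exists_ExpK Z : ess_bounded Z -> exists c, ExpK nabs P Z c.
Proof.
move=> Zb; set S := [set dev Z c | c in [set: K]].
have S_lb0 : lbound S 0 by move=> _ [c _ <-]; exact: dev_ge0.
have S_inf : has_inf S by split; [exists (dev Z 0), 0 | exists 0].
have inf_ge0 : 0 <= inf S by apply: lb_le_inf S_inf.1 S_lb0.
have approx n : exists c, dev Z c < inf S + n.+1%:R^-1.
  have n_gt0 : 0 < n.+1%:R^-1 :> R by rewrite invr_gt0.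
  by have [_ [c _ <-]] := inf_adherent n_gt0 S_inf; exists c.
have [u u_approx] := choice approx.
have u_bnd n : nabs (u n) <= Num.max (inf S + 1) (dev Z 0).
  rewrite -[u n]subr0; apply: le_trans (nabs_sub_le_dev _ _ Zb) _.
  rewrite ge_max !le_max lexx !orbT andbT ltW // (lt_le_trans (u_approx n)) //.
  by rewrite lerD2l invf_le1 // ler1n.
have [l l_cluster] := bounded_cluster hK u_bnd.
exists l; apply/ExpKP => // c'; apply: le_trans (ge_inf S_inf.2 (ex_intro2 _ _ c' I erefl)).
apply/ler_addgt0Pr => e e0; have [m /= m_e] := filter_ex (near_infty_natSinv_lt (PosNum e0)).
have [n mn unl] := l_cluster e e0 m.
apply: le_trans (dev_shift (u n) l Zb) _; rewrite ge_max (le_trans (ltW unl)) ?lerDr //.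
rewrite ltW // (lt_le_trans (u_approx n)) // lerD2l ltW // (le_lt_trans _ m_e) //.
exact: invSn_le.
Qed.

Lemma exists_nabs_gt Z t : ess_bounded Z -> t < dev Z 0 ->
  exists w, t < nabs (Z w) <= dev Z 0.
Proof.
move=> Zb t_lt; apply: contrapT => no_w; move: t_lt; apply/negP; rewrite -leNgt.
apply: dev_le => //; apply: filterS (dev_ae 0 Zb) => w; rewrite subr0 => wD.
by rewrite leNgt; apply/negP => tw; apply: no_w; exists w; rewrite tw.
Qed.

Lemma dev0_attained Z : ess_bounded Z -> exists a, nabs a = dev Z 0.
Proof.
move=> Zb; set D := dev Z 0; have [D_le0|D_gt0] := leP D 0.
  by exists 0; rewrite (nabs0 hK); apply/le_anti; rewrite D_le0 dev_ge0.
have approx n : exists w, D - n.+1%:R^-1 < nabs (Z w) <= D.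
  by apply: exists_nabs_gt; rewrite // ltrBlDr ltrDl invr_gt0.
have [w w_approx] := choice approx.
have [l l_cluster] := bounded_cluster hK (fun n => (andP (w_approx n)).2).
have D2 : 0 < D / 2 by rewrite divr_gt0.
exists l; apply/le_anti/andP; split.
  have [n _ wl] := l_cluster _ D2 0%N; rewrite -[l](subrKC (Z (w n))).
  apply: (nabsD_le hK); first by case/andP: (w_approx n).
  by rewrite (nabs_distC hK) (le_trans (ltW wl)) //; lra.
apply/ler_addgt0Pr => e e0; set e' := Num.min e (D / 2).
have e'_gt0 : 0 < e' by rewrite lt_min e0.
have [e'_e e'_D2] : e' <= e /\ e' <= D / 2 by split; rewrite /e' ge_min lexx ?orbT.
have [m /= m_e'] := filter_ex (near_infty_natSinv_lt (PosNum e'_gt0)).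
have [n mn wl] := l_cluster _ D2 m; have /andP[w_gt _] := w_approx n.
have w_big : D - e' < nabs (Z (w n)).
  apply: le_lt_trans w_gt; rewrite lerD2l lerN2 ltW // (le_lt_trans _ m_e') //.
  exact: invSn_le.
have -> : nabs l = nabs (Z (w n)).
  by apply: (nabs_isosceles hK); apply: lt_trans wl _; apply: le_lt_trans w_big; lra.
lra.
Qed.

Lemma dev_affine Z k b c : ess_bounded Z -> k != 0 ->
  dev (fun w => k * Z w + b) (k * c + b) = nabs k * dev Z c.
Proof.
move=> Zb k0; have k_gt0 : 0 < nabs k by rewrite (nabs_gt0 hK).
have Zkb := ess_bounded_affine k b Zb.
have affineE w : k * Z w + b - (k * c + b) = k * (Z w - c).
  by rewrite opprD addrACA subrr addr0 mulrBr.
apply/le_anti/andP; split.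
  apply: dev_le => //; apply: filterS (dev_ae c Zb) => w wc.
  by rewrite affineE (nabsM hK) ler_pM2l.
rewrite mulrC -ler_pdivlMr //; apply: dev_le => //; apply: filterS (dev_ae (k * c + b) Zkb) => w.
by rewrite affineE (nabsM hK) ler_pdivlMr // mulrC.
Qed.

Lemma ExpK_image Z Z' (f : K -> K) (m : R) : ess_bounded Z -> ess_bounded Z' -> 0 < m ->
  (forall c', exists c, f c = c') -> (forall c, dev Z' (f c) = m * dev Z c) ->
  ExpK nabs P Z' = f @` ExpK nabs P Z.
Proof.
move=> Zb Z'b m0 f_surj devf; apply/seteqP; split => [c' | _ [c /(ExpKP _ Zb) c_min <-]].
  have [c <-] := f_surj c'; move/(ExpKP _ Z'b) => fc_min; exists c => //.
  by apply/ExpKP => // c''; have := fc_min (f c''); rewrite !devf ler_pM2l.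
by apply/ExpKP => // c'; have [c'' <-] := f_surj c'; rewrite !devf ler_pM2l.
Qed.
End EssSupDistance.

Lemma filter_all_mem (T : eqType) (U : Type) (F : set_system U) (L : seq T) (Q : T -> U -> Prop) :
  Filter F -> (forall z, z \in L -> \forall w \near F, Q z w) ->
  \forall w \near F, forall z, z \in L -> Q z w.
Proof.
move=> FF; elim: L => [_|z L IH QL]; first by apply: nearW => w z.
apply: filterS2 (QL z (mem_head _ _)) (IH _) => [w Qz QL' z'|z' zL].
  by rewrite in_cons => /orP[/eqP->|/QL'].
by apply: QL; rewrite in_cons zL orbT.
Qed.

Section BorelK.
Variables (R : realType) (K : fieldType) (nabs : K -> R).
Hypothesis hK : nonarch_local_field_abs nabs.

Lemma borelKC A : borelK nabs A -> borelK nabs (~` A).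
Proof. by move=> mA; rewrite -setTD; apply: sigma_algebraCD. Qed.

Lemma borelKT : borelK nabs [set: K].
Proof. by rewrite -setC0; apply: borelKC; apply: sub_sigma_algebra => x []. Qed.

Lemma borelK_cball c r : borelK nabs (cball nabs c r).
Proof.
rewrite -[cball _ _ _]setCK; apply: borelKC; apply: sub_sigma_algebra => x /= /negP.
rewrite -ltNge => rx; have [x_eq_c|x_neq_c] := eqVneq x c.
  exists 1 => // y _; apply/negP; rewrite -ltNge.
  by move: rx; rewrite x_eq_c subrr (nabs0 hK) => /lt_le_trans; apply; exact: nabs_ge0.
exists (nabs (x - c)); first by rewrite (nabs_gt0 hK) subr_eq0.
move=> y yx; apply/negP; rewrite -ltNge; suff -> : nabs (y - c) = nabs (x - c) by [].
by apply: (nabs_isosceles hK); rewrite opprB addrA subrK (nabs_distC hK).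
Qed.
End BorelK.

Section Independence.
Variables (R : realType) (K : fieldType) (nabs : K -> R).
Hypothesis hK : nonarch_local_field_abs nabs.
Variables (d : measure_display) (Omega : measurableType d) (P : probability Omega R).

Lemma ae_notin (A : set Omega) : measurable A -> P A = 0%E -> \forall w \ae P, ~ A w.
Proof. by move=> mA PA0; exists A; split => // w /= /contrapT. Qed.

Lemma null_of_ae (A : set Omega) : measurable A -> (\forall w \ae P, ~ A w) -> P A = 0%E.
Proof.
move=> mA [N [mN N0 AN]]; apply/eqP; rewrite -measure_le0 -N0.
by apply: le_measure; rewrite ?inE // => w Aw; apply: AN => /(_ Aw).
Qed.

Lemma indepK_sym X Y : indepK nabs P X Y -> indepK nabs P Y X.
Proof. by move=> XY A B mA mB; rewrite setIC XY // muleC. Qed.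

Lemma indep_ae X Y A B : measurableK nabs X -> measurableK nabs Y ->
  indepK nabs P X Y -> borelK nabs A -> borelK nabs B -> (0 < P (X @^-1` A))%E ->
  (\forall w \ae P, A (X w) -> B (Y w)) -> \forall w \ae P, B (Y w).
Proof.
move=> mX mY XY mA mB PA_gt0 AB; have mnB := mY _ (borelKC mB).
have : P (X @^-1` A `&` Y @^-1` (~` B)) = 0%E.
  apply: null_of_ae; first exact: measurableI (mX _ mA) mnB.
  by apply: filterS AB => w AB' [Aw]; apply; exact: AB'.
rewrite XY //; last exact: borelKC.
move/eqP; rewrite mule_eq0 (gt_eqF PA_gt0) /= => /eqP PnB.
by apply: filterS (ae_notin mnB PnB) => w /contrapT.
Qed.

Lemma indep_dev_le X Y x rho c r : measurableK nabs X -> measurableK nabs Y ->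
  indepK nabs P X Y -> ess_bounded nabs P Y ->
  (0 < P (X @^-1` cball nabs x rho))%E ->
  (\forall w \ae P, nabs (X w - x) <= rho -> nabs (Y w - c) <= r) -> dev nabs P Y c <= r.
Proof.
move=> mX mY XY Yb PX_gt0 XY_ball; apply: (dev_le hK) => //.
exact: (indep_ae mX mY XY (borelK_cball hK x rho) (borelK_cball hK c r)).
Qed.

Lemma pr_dev_gt0 Z t : measurableK nabs Z -> ess_bounded nabs P Z -> t < dev nabs P Z 0 ->
  (0 < P (Z @^-1` ~` cball nabs 0 t))%E.
Proof.
move=> mZ Zb t_lt; rewrite lt0e measure_ge0 andbT; apply/negP => /eqP P0.
move: t_lt; apply/negP; rewrite -leNgt.
apply: (dev_le hK) => //; apply: filterS (ae_notin (mZ _ (borelKC (borelK_cball hK 0 t))) P0).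
by move=> w /contrapT.
Qed.

Lemma pr_cball_gt0 Z S rho : measurableK nabs Z -> ess_bounded nabs P Z ->
  borelK nabs S -> (0 < P (Z @^-1` S))%E -> 0 < rho ->
  exists z, S z /\ (0 < P (Z @^-1` cball nabs z rho))%E.
Proof.
move=> mZ [y Zy] mS PS_gt0 rho0; have [L L_cover] := finite_cover hK y rho0.
(* Otherwise [S] meets each of finitely many balls covering the range of [Z]
   only in a null set. *)
apply: contrapT => no_z; move: PS_gt0; rewrite (null_of_ae (mZ _ mS)) ?ltxx //.
suff null_L z : z \in L -> \forall w \ae P, ~ (S (Z w) /\ cball nabs z rho (Z w)).
  apply: filterS2 Zy (filter_all_mem _ null_L) => w wy notin_L Sw.
  by have [z zL zw] := L_cover _ wy; exact: notin_L z zL (conj Sw zw).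
move=> _; have [[w0 [Sw0 zw0]]|none] := pselect (exists w, S (Z w) /\ cball nabs z rho (Z w)).
  have ball_null : P (Z @^-1` cball nabs (Z w0) rho) = 0%E.
    apply/eqP; rewrite eq_le measure_ge0 andbT leNgt; apply/negP => pos.
    by apply: no_z; exists (Z w0); split.
  apply: filterS (ae_notin (mZ _ (borelK_cball hK _ _)) ball_null) => w notin [_ zw].
  exact/notin/(cball_recenter hK zw0).
by apply: aeW => w Sw; apply: none; exists w.
Qed.

End Independence.

Section ExpectationRules.
Variables (R : realType) (K : fieldType) (nabs : K -> R).
Hypothesis hK : nonarch_local_field_abs nabs.
Variables (d : measure_display) (Omega : measurableType d) (P : probability Omega R).
Implicit Types X Y : Omega -> K.

Local Notation E := (ExpK nabs P).
Local Notation dev := (dev nabs P).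

Lemma ExpK_affine X k b : ess_bounded nabs P X ->
  E (fun w => k * X w + b) = [set k * a + b | a in E X].
Proof.
move=> Xb; have [->|k0] := eqVneq k 0.
  rewrite (_ : (fun w => _) = fun _ => b); last by apply/funext => w; rewrite mul0r add0r.
  rewrite ExpK_cst //; apply/seteqP; split => [_ ->|_ [a _ <-]]; last by rewrite mul0r add0r.
  by have [a Xa] := exists_ExpK hK Xb; exists a; rewrite // mul0r add0r.
apply: (ExpK_image hK Xb (ess_bounded_affine hK k b Xb) (_ : 0 < nabs k)).
- by rewrite (nabs_gt0 hK).
- by move=> c; exists ((c - b) / k); rewrite mulrC divfK // subrK.
- by move=> c; rewrite (dev_affine hK).
Qed.

Lemma dev_add_le X Y x y : ess_bounded nabs P X -> ess_bounded nabs P Y ->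
  dev (fun w => X w + Y w) (x + y) <= Num.max (dev X x) (dev Y y).
Proof.
move=> Xb Yb; apply: (dev_le hK); first exact: (ess_boundedD hK).
apply: filterS2 (dev_ae hK x Xb) (dev_ae hK y Yb) => w wx wy.
by rewrite opprD addrACA; apply: (nabsD_le hK); rewrite le_max ?wx ?wy ?orbT.
Qed.

Lemma ExpK_add_sub X Y : ess_bounded nabs P X -> ess_bounded nabs P Y ->
  E (fun w => X w + Y w) `<=` [set a + c | a in E X & c in E Y].
Proof.
move=> Xb Yb; have [x Xx] := exists_ExpK hK Xb; have [y Yy] := exists_ExpK hK Yb.
rewrite (ExpK_cball hK Xb Xx) (ExpK_cball hK Yb Yy) (cball_addE hK) ?(dev_ge0 hK) //.
exact: (ExpK_sub_cball hK (ess_boundedD hK Xb Yb) (dev_add_le x y Xb Yb)).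
Qed.


Lemma dev_add_ge_indep X Y x v : measurableK nabs X -> measurableK nabs Y ->
  indepK nabs P X Y -> ess_bounded nabs P X -> ess_bounded nabs P Y -> E X x ->
  dev X x <= dev (fun w => X w + Y w) v.
Proof.
move=> mX mY XY Xb Yb /(ExpKP hK _ Xb) x_min; apply/ler_addgt0Pr => e e0.
set rho := dev _ v + e; have rho0 : 0 < rho by rewrite ltr_wpDl ?(dev_ge0 hK).
have PY : (0 < P (Y @^-1` [set: K]))%E by rewrite preimage_setT probability_setT.
have [y [_ PYy]] := pr_cball_gt0 hK mY Yb (@borelKT _ _ nabs) PY rho0.
(* Where [Y] is [rho]-close to [y], [X] is [rho]-close to [v - y]. *)
apply: le_trans (x_min (v - y)) _.
apply: (indep_dev_le hK mY mX (indepK_sym XY) Xb PYy).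
apply: filterS (dev_ae hK v (ess_boundedD hK Xb Yb)) => w wv wy.
have -> : X w - (v - y) = (X w + Y w - v) - (Y w - y) by ring.
by apply: (nabsB_le hK) => //; rewrite (le_trans wv) ?lerDl ?ltW.
Qed.

Lemma ExpK_add_indep X Y : measurableK nabs X -> measurableK nabs Y ->
  indepK nabs P X Y -> ess_bounded nabs P X -> ess_bounded nabs P Y ->
  E (fun w => X w + Y w) = [set a + c | a in E X & c in E Y].
Proof.
move=> mX mY XY Xb Yb; have [x Xx] := exists_ExpK hK Xb; have [y Yy] := exists_ExpK hK Yb.
rewrite (ExpK_cball hK Xb Xx) (ExpK_cball hK Yb Yy) (cball_addE hK) ?(dev_ge0 hK) //.
apply: (ExpK_eq_cball hK (ess_boundedD hK Xb Yb) (dev_add_le x y Xb Yb)) => v.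
rewrite ge_max (dev_add_ge_indep _ mX mY XY Xb Yb Xx) /=.
rewrite (_ : (fun w => X w + Y w) = fun w => Y w + X w); last by apply/funext => w; rewrite addrC.
exact: (dev_add_ge_indep _ mY mX (indepK_sym XY) Yb Xb Yy).
Qed.


Lemma dev_mul_le X Y x y : ess_bounded nabs P X -> ess_bounded nabs P Y ->
  dev (fun w => X w * Y w) (x * y) <=
    Num.max (Num.max (nabs x) (dev X x) * dev Y y) (dev Y 0 * dev X x).
Proof.
move=> Xb Yb; apply: (dev_le hK); first exact: (ess_boundedM hK).
apply: filterS3 (dev_ae hK x Xb) (dev_ae hK 0 Yb) (dev_ae hK y Yb) => w wx w0 wy.
have -> : X w * Y w - x * y = (X w - x) * Y w + x * (Y w - y) by ring.
apply: (nabsD_le hK); rewrite (nabsM hK) le_max; apply/orP; [right|left].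
  by rewrite mulrC ler_pM ?(nabs_ge0 hK) // -(subr0 (Y w)).
by rewrite ler_pM ?(nabs_ge0 hK) // le_max lexx.
Qed.

Lemma indep_mul_dev_le X Y x rho y v : measurableK nabs X -> measurableK nabs Y ->
  indepK nabs P X Y -> ess_bounded nabs P X -> ess_bounded nabs P Y -> E Y y ->
  (0 < P (X @^-1` cball nabs x rho))%E ->
  nabs x * dev Y y <= Num.max (dev (fun w => X w * Y w) v) (rho * dev Y 0).
Proof.
move=> mX mY XY Xb Yb /(ExpKP hK _ Yb) y_min PXx.
have [->|x0] := eqVneq x 0; first by rewrite (nabs0 hK) mul0r le_max (dev_ge0 hK).
have x_gt0 : 0 < nabs x by rewrite (nabs_gt0 hK).
rewrite mulrC -ler_pdivlMr //; apply: le_trans (y_min (v / x)) _.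
apply: (indep_dev_le hK mX mY XY Yb PXx).
apply: filterS2 (dev_ae hK v (ess_boundedM hK Xb Yb)) (dev_ae hK 0 Yb) => w wv wY wx.
have -> : Y w - v / x = (x * Y w - v) / x by rewrite mulrBl [x * _]mulrC mulfK.
rewrite (nabsM hK) (nabsV hK) ler_pM2r ?invr_gt0 //.
have -> : x * Y w - v = (X w * Y w - v) - (X w - x) * Y w by ring.
apply: (nabsB_le hK); first by rewrite le_max wv.
by rewrite (nabsM hK) le_max ler_pM ?(nabs_ge0 hK) ?orbT // -(subr0 (Y w)).
Qed.

Lemma dev_mul_ge_indep X Y y v : measurableK nabs X -> measurableK nabs Y ->
  indepK nabs P X Y -> ess_bounded nabs P X -> ess_bounded nabs P Y -> E Y y ->
  dev X 0 * dev Y y <= dev (fun w => X w * Y w) v.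
Proof.
move=> mX mY XY Xb Yb Yy; set s := dev _ v.
have s_ge0 : 0 <= s by exact: dev_ge0.
have t_le t : t < dev X 0 -> t * dev Y y <= s.
  move=> t_lt; apply/ler_addgt0Pr => e e0; set z := s + e.
  have z_gt0 : 0 < z by rewrite ltr_wpDl.
  have B1 : 0 < dev Y 0 + 1 by rewrite ltr_wpDl ?(dev_ge0 hK).
  set rho := z / (dev Y 0 + 1); have rho0 : 0 < rho by rewrite divr_gt0.
  have [x [/negP tx PXx]] := pr_cball_gt0 hK mX Xb (borelKC (borelK_cball hK 0 t))
    (pr_dev_gt0 hK mX Xb t_lt) rho0.
  apply: (@le_trans _ _ (nabs x * dev Y y)).
    by rewrite ler_wpM2r ?(dev_ge0 hK) // ltW // -(subr0 x) ltNge.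
  apply: le_trans (indep_mul_dev_le v mX mY XY Xb Yb Yy PXx) _.
  rewrite ge_max lerDl ltW //= /rho mulrAC ler_pdivrMr // ler_pM2l //; lra.
have [Dy_le0|Dy_gt0] := leP (dev Y y) 0.
  by rewrite (le_trans (ler_wpM2l (dev_ge0 hK P X 0) Dy_le0)) // mulr0.
rewrite -ler_pdivlMr //; apply/ler_addgt0Pr => e e0.
by rewrite -lerBlDr ler_pdivlMr //; apply: t_le; rewrite ltrBlDr ltrDl.
Qed.

Lemma ExpK_mul_indep X Y : measurableK nabs X -> measurableK nabs Y ->
  indepK nabs P X Y -> ess_bounded nabs P X -> ess_bounded nabs P Y ->
  E (fun w => X w * Y w) = [set a * c | a in E X & c in E Y].
Proof.
move=> mX mY XY Xb Yb; have [x Xx] := exists_ExpK hK Xb; have [y Yy] := exists_ExpK hK Yb.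
have dev0E Z z : ess_bounded nabs P Z -> E Z z -> dev Z 0 = Num.max (nabs z) (dev Z z).
  by move=> Zb Zz; rewrite (dev_ExpK hK _ Zb Zz) sub0r (nabsN hK).
have attained Z z : ess_bounded nabs P Z -> E Z z ->
    exists a, nabs a = Num.max (nabs z) (dev Z z).
  by move=> Zb Zz; rewrite -dev0E //; exact: dev0_attained.
rewrite (ExpK_cball hK Xb Xx) (ExpK_cball hK Yb Yy).
rewrite (cball_mulE hK (dev_ge0 hK P X x) (dev_ge0 hK P Y y) (attained _ _ Xb Xx)
  (attained _ _ Yb Yy)) -!dev0E //.
apply: (ExpK_eq_cball hK (ess_boundedM hK Xb Yb)).
  by rewrite (dev0E _ x) //; exact: dev_mul_le.
move=> v; rewrite ge_max (dev_mul_ge_indep v mX mY XY Xb Yb Yy) /=.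
rewrite (_ : (fun w => X w * Y w) = fun w => Y w * X w); last by apply/funext => w; rewrite mulrC.
exact: (dev_mul_ge_indep v mY mX (indepK_sym XY) Yb Xb Xx).
Qed.

End ExpectationRules.

Theorem mainTheorem2 (R : realType) (K : fieldType) (nabs : K -> R)
  (hK : nonarch_local_field_abs nabs)
  (d : measure_display) (Omega : measurableType d) (P : probability Omega R)
  (X Y : Omega -> K) (hX : inLinf nabs P X) (hY : inLinf nabs P Y) (k b : K) :
  ExpK nabs P (fun w => k * X w + b) = [set k * a + b | a in ExpK nabs P X]
  /\ (ExpK nabs P (fun w => X w + Y w)
        `<=` [set a + c | a in ExpK nabs P X & c in ExpK nabs P Y]
      /\ (indepK nabs P X Y ->
          ExpK nabs P (fun w => X w + Y w)
            = [set a + c | a in ExpK nabs P X & c in ExpK nabs P Y]))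
  /\ (indepK nabs P X Y ->
      ExpK nabs P (fun w => X w * Y w)
        = [set a * c | a in ExpK nabs P X & c in ExpK nabs P Y]).
Proof.
have [[mX /(ess_bounded_normInf hK) Xb] [mY /(ess_bounded_normInf hK) Yb]] := (hX, hY).
split; first exact: ExpK_affine.
split; first split.
- exact: ExpK_add_sub.
- by move=> XY; apply: ExpK_add_indep.
- by move=> XY; apply: ExpK_mul_indep.
Qed.
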